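(* If $\gamma$ is an edge path in the 1-skeleton of $K$ of length $n$ which has minimal length among edge paths joining its endpoints, then its subdivision $\omega(\gamma)$ is an edge path in the 1-skeleton of $\omega(K)$ of length $2n$ which has minimal length among edge paths in $\omega(K)$ joining its endpoints.
   Context: $K$ is the pentagonal combinatorial tiling: a 2-dimensional CW-complex homeomorphic to the open disk, obtained as follows. The subdivision rule $\omega$ acts on a pentagon with boundary vertices $v_1,\dots,v_5$ in cyclic order (indices mod 5): add a vertex $m_i$ inside each edge $v_iv_{i+1}$, interior vertices $c_1,\dots,c_5$, edges $c_ic_{i+1}$ and $c_im_i$, and replace the face by the central pentagon $c_1\cdots c_5$ and petals $v_i\,m_i\,c_i\,c_{i-1}\,m_{i-1}$. $K_0$ is one pentagon, $K_n=\omega^n(K_0)$, $K_n$ embeds onto the central superpentagon $\omega^n(\text{central face of }\omega(K_0))$ of $K_{n+1}$, and $K$ is the direct limit. $\omega(K)$ is the complex on the same space obtained by applying $\omega$ to every face of $K$; each edge of $K$ becomes two edges of $\omega(K)$, so an edge path $\gamma$ of $K$ becomes an edge path $\omega(\gamma)$ of $\omega(K)$. The length of an edge path is its number of edges. *)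

From HB Require Import structures.
From mathcomp Require Import all_boot.
Set Implicit Arguments.
Unset Strict Implicit.
Unset Printing Implicit Defensive.

(* Symbolic names of vertices.
   - Base i  : (i = 0..4) the vertices v_0..v_4 of the initial pentagon K_0;
   - Mid a b : the midpoint of the edge {a,b} (always built with [mkMid],
               which orders the two endpoints, so that the name is symmetric);
   - Cen a b : the new interior vertex c of the face F having the directed
               edge a -> b on its boundary (all faces are consistently
               oriented, so F is determined by a -> b), namely the c adjacent
               to the midpoint of {a,b}. *)
Inductive pt : Type :=
| Base of nat
| Mid of pt & pt
| Cen of pt & pt.

Fixpoint pt_enc (v : pt) : GenTree.tree nat :=
  match v with
  | Base i => GenTree.Leaf i
  | Mid a b => GenTree.Node 0 [:: pt_enc a; pt_enc b]
  | Cen a b => GenTree.Node 1 [:: pt_enc a; pt_enc b]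
  end.

Fixpoint pt_dec (t : GenTree.tree nat) : option pt :=
  match t with
  | GenTree.Leaf i => Some (Base i)
  | GenTree.Node 0 [:: ta; tb] =>
      match pt_dec ta, pt_dec tb with Some a, Some b => Some (Mid a b) | _, _ => None end
  | GenTree.Node 1 [:: ta; tb] =>
      match pt_dec ta, pt_dec tb with Some a, Some b => Some (Cen a b) | _, _ => None end
  | _ => None
  end.

Lemma pt_encK : pcancel pt_enc pt_dec.
Proof. by elim=> [i|a IHa b IHb|a IHa b IHb] //=; rewrite IHa IHb. Qed.

Fixpoint pt_eqb (a b : pt) : bool :=
  match a, b with
  | Base i, Base j => i == j
  | Mid a1 a2, Mid b1 b2 => pt_eqb a1 b1 && pt_eqb a2 b2
  | Cen a1 a2, Cen b1 b2 => pt_eqb a1 b1 && pt_eqb a2 b2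
  | _, _ => false
  end.

Lemma pt_eqbP : Equality.axiom pt_eqb.
Proof.
elim=> [i|a1 IH1 a2 IH2|a1 IH1 a2 IH2] [j|b1 b2|b1 b2] /=; try by constructor.
- by apply: (iffP eqP) => [->|[->]].
- by apply: (iffP andP) => [[/IH1-> /IH2->]|[<- <-]]; split; [apply/IH1|apply/IH2].
- by apply: (iffP andP) => [[/IH1-> /IH2->]|[<- <-]]; split; [apply/IH1|apply/IH2].
Qed.

HB.instance Definition _ := hasDecEq.Build pt pt_eqbP.
HB.instance Definition _ := PCanIsCountable pt_encK.

Fixpoint ptcmp (a b : pt) : comparison :=
  match a, b with
  | Base i, Base j => Nat.compare i j
  | Base _, _ => Lt
  | _, Base _ => Gt
  | Mid a1 a2, Mid b1 b2 =>
      match ptcmp a1 b1 with Eq => ptcmp a2 b2 | c => c end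
  | Mid _ _, Cen _ _ => Lt
  | Cen _ _, Mid _ _ => Gt
  | Cen a1 a2, Cen b1 b2 =>
      match ptcmp a1 b1 with Eq => ptcmp a2 b2 | c => c end
  end.

Definition mkMid (a b : pt) : pt :=
  if ptcmp a b is Gt then Mid b a else Mid a b.


(* One application of the subdivision rule omega to an oriented pentagon
   f = [v_0; ...; v_4]: the central pentagon c_0 ... c_4 and the petals
   v_i m_i c_i c_{i-1} m_{i-1}, where m_i = midpoint of v_i v_{i+1} and
   c_i = Cen v_i v_{i+1}. *)
Definition omega_face (f : seq pt) : seq (seq pt) :=
  let v i := nth (Base 0) f (i %% 5) in
  [seq Cen (v i) (v i.+1) | i <- iota 0 5] ::
  [seq [:: v i; mkMid (v i) (v i.+1); Cen (v i) (v i.+1);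
         Cen (v (i + 4)) (v i); mkMid (v (i + 4)) (v i)] | i <- iota 0 5].

Fixpoint faces (n : nat) : seq (seq pt) :=
  match n with
  | 0 => [:: [seq Base i | i <- iota 0 5]]
  | n.+1 => flatten [seq omega_face f | f <- faces n]
  end.

Definition vertK (n : nat) (v : pt) : bool := has (fun f => v \in f) (faces n).

Definition consec (f : seq pt) (u v : pt) : bool :=
  has (fun i => (nth (Base 0) f i == u) && (nth (Base 0) f (i.+1 %% 5) == v))
      (iota 0 5).

Definition adjK (n : nat) (u v : pt) : bool :=
  has (fun f => consec f u v || consec f v u) (faces n).

(* The embedding K_n -> K_{n+1} onto the central superpentagon
   omega^n(central face of omega(K_0)), v_i |-> c_i, extended to all names;
   it is also the embedding omega(K_n) = K_{n+1} -> K_{n+2} = omega(K_{n+1}). *)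
Fixpoint emb (v : pt) : pt :=
  match v with
  | Base i => Cen (Base i) (Base (i.+1 %% 5))
  | Mid a b => mkMid (emb a) (emb b)
  | Cen a b => Cen (emb a) (emb b)
  end.

Definition lift (k : nat) (v : pt) : pt := iter k emb v.

(* A vertex of the limit is represented by a pair (n, v),
   v a name at stage n; the stage-n complex is K_(n+d), where d = 0 gives
   K = lim K_n and d = 1 gives omega(K) = lim omega(K_n) = lim K_(n+1). *)
Definition lvert (d : nat) (x : nat * pt) : Prop :=
  exists N, x.1 <= N /\ vertK (N + d) (lift (N - x.1) x.2).

Definition leq_vert (x y : nat * pt) : Prop :=
  exists N, [/\ x.1 <= N, y.1 <= N & lift (N - x.1) x.2 = lift (N - y.1) y.2].

Definition ladj (d : nat) (x y : nat * pt) : Prop :=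
  exists N, [/\ x.1 <= N, y.1 <= N & adjK (N + d) (lift (N - x.1) x.2) (lift (N - y.1) y.2)].

Fixpoint ladj_chain (d : nat) (p : seq (nat * pt)) : Prop :=
  match p with
  | x :: ((y :: _) as t) => ladj d x y /\ ladj_chain d t
  | _ => True
  end.

Definition is_edge_path (d : nat) (p : seq (nat * pt)) : Prop :=
  p <> [::] /\ (forall x, x \in p -> lvert d x) /\ ladj_chain d p.

Definition plength (p : seq (nat * pt)) : nat := (size p).-1.

Definition pstart (p : seq (nat * pt)) := head (0, Base 0) p.
Definition pend (p : seq (nat * pt)) := last (0, Base 0) p.

Definition is_geodesic (d : nat) (p : seq (nat * pt)) : Prop :=
  forall q, is_edge_path d q -> leq_vert (pstart q) (pstart p) ->
    leq_vert (pend q) (pend p) -> plength p <= plength q.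

Definition lmid (x y : nat * pt) : nat * pt :=
  let N := maxn x.1 y.1 in (N, mkMid (lift (N - x.1) x.2) (lift (N - y.1) y.2)).

(* omega(gamma): every edge x y of gamma is replaced by x, mid(x,y), y.
   A vertex (n, v) of K is the same vertex (n, v) of omega(K). *)
Fixpoint omega_path (p : seq (nat * pt)) : seq (nat * pt) :=
  match p with
  | x :: ((y :: _) as t) => x :: lmid x y :: omega_path t
  | _ => p
  end.

From Pilot Require Import Defs.
From mathcomp Require Import all_boot zify.
Set Implicit Arguments.
Unset Strict Implicit.
Unset Printing Implicit Defensive.

(* A geodesic of K lives in some finite stage K_N, and its subdivision in
   K_(N+1).  The key estimate is that an edge path of length L in K_(N+1)
   between two vertices of K_N can be replaced by one of length at most L/2 in
   K_N.  It is proved by walking along the path while maintaining bounds on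
   K_N-distances from its origin: an old vertex is at distance at most L/2,
   the two endpoints of an old edge whose midpoint has been reached have
   distances summing to at most L, and when the centre of a face attached to
   its i-th edge has been reached, the endpoints of its j-th edge have
   distances summing to at most L + 1 + d(i, j), with d the cyclic distance on
   Z/5.  Each of the four kinds of edges of a subdivided pentagon preserves
   these bounds as L grows by one.  That the new names of K_(N+1) do not clash
   with old ones, and that a directed edge lies on a single face, is checked
   by induction on N. *)

Arguments mkMid : simpl never.

(** * Names of vertices *)

(* [lift] alone would denote the ordinal lifting of fintype. *)
Notation lft := Defs.lift.

Lemma ptcmp_sym a b : ptcmp b a = CompOpp (ptcmp a b).
Proof.
elim: a b => [i|a1 IH1 a2 IH2|a1 IH1 a2 IH2] [j|b1 b2|b1 b2] //=.
- by rewrite PeanoNat.Nat.compare_antisym.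
- by rewrite IH1; case: (ptcmp a1 b1) => //=; rewrite IH2.
- by rewrite IH1; case: (ptcmp a1 b1) => //=; rewrite IH2.
Qed.

Lemma ptcmp_eq a b : ptcmp a b = Eq -> a = b.
Proof.
elim: a b => [i|a1 IH1 a2 IH2|a1 IH1 a2 IH2] [j|b1 b2|b1 b2] //=.
- by move/PeanoNat.Nat.compare_eq => ->.
- by case E: (ptcmp a1 b1) => // /IH2 ->; rewrite (IH1 _ E).
- by case E: (ptcmp a1 b1) => // /IH2 ->; rewrite (IH1 _ E).
Qed.

Lemma mkMidC a b : mkMid a b = mkMid b a.
Proof.
rewrite /mkMid [ptcmp b a]ptcmp_sym; case E: (ptcmp a b) => //=.
by rewrite (ptcmp_eq E).
Qed.

Lemma mkMidE a b : mkMid a b = Mid a b \/ mkMid a b = Mid b a.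
Proof. by rewrite /mkMid; case: (ptcmp a b); auto. Qed.

Lemma mkMid_inj a b c d : mkMid a b = mkMid c d -> (a = c /\ b = d) \/ (a = d /\ b = c).
Proof. by case: (mkMidE a b) => ->; case: (mkMidE c d) => -> [-> ->]; auto. Qed.

Lemma mkMid_neq_Cen a b c d : mkMid a b <> Cen c d.
Proof. by case: (mkMidE a b) => ->. Qed.

Lemma emb_mkMid a b : emb (mkMid a b) = mkMid (emb a) (emb b).
Proof. by case: (mkMidE a b) => -> //=; rewrite mkMidC. Qed.

Lemma lft_mkMid k a b : lft k (mkMid a b) = mkMid (lft k a) (lft k b).
Proof. by elim: k => //= k IH; rewrite /Defs.lift /= -!/(Defs.lift _ _) IH emb_mkMid. Qed.

Lemma lftD m n a : lft (m + n) a = lft m (lft n a).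
Proof. by rewrite /Defs.lift iterD. Qed.

(** * Subdivision of a face *)

(* Faces are oriented pentagons; corners are indexed cyclically by [nat]. *)
Notation vtx f i := (nth (Base 0) f (i %% 5)).
Definition cen f i := Cen (vtx f i) (vtx f i.+1).
Definition mid f i := mkMid (vtx f i) (vtx f i.+1).
Definition petal f i := [:: vtx f i; mid f i; cen f i; cen f (i + 4); mid f (i + 4)].
Definition central f := [seq cen f i | i <- iota 0 5].

Lemma vtx_eq f i j : i %% 5 = j %% 5 -> vtx f i = vtx f j.
Proof. by move->. Qed.

Lemma vtx_addn4S f i : vtx f (i + 4).+1 = vtx f i.
Proof. by apply: vtx_eq; lia. Qed.

Lemma cen_eq f i j : i %% 5 = j %% 5 -> cen f i = cen f j.
Proof. by move=> eq_ij; rewrite /cen (vtx_eq f eq_ij) (@vtx_eq f i.+1 j.+1) //; lia. Qed.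

Lemma mid_eq f i j : i %% 5 = j %% 5 -> mid f i = mid f j.
Proof. by move=> eq_ij; rewrite /mid (vtx_eq f eq_ij) (@vtx_eq f i.+1 j.+1) //; lia. Qed.

Lemma omega_faceE f : omega_face f = central f :: [seq petal f i | i <- iota 0 5].
Proof. by []. Qed.

Lemma size_central f : size (central f) = 5. Proof. by rewrite size_map size_iota. Qed.

Lemma petal_in f i : i < 5 -> petal f i \in omega_face f.
Proof. by move=> lt_i5; rewrite omega_faceE inE map_f ?orbT // mem_iota. Qed.

Lemma vtx_central f k : vtx (central f) k = cen f k.
Proof.
rewrite (nth_map 0) ?size_iota ?ltn_pmod // nth_iota ?ltn_pmod //.
by apply: cen_eq; rewrite add0n modn_mod.
Qed.

Lemma omega_faceP f g :
  g \in omega_face f -> g = central f \/ exists2 i, i < 5 & g = petal f i.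
Proof.
rewrite omega_faceE inE => /orP[/eqP->|/mapP[i]]; first by left.
by rewrite mem_iota => /andP[_ lt_i5] ->; right; exists i.
Qed.

Lemma faces_SP n g :
  reflect (exists2 f, f \in faces n & g \in omega_face f) (g \in faces n.+1).
Proof. exact: flatten_mapP. Qed.

Lemma size_faces n f : f \in faces n -> size f = 5.
Proof.
elim: n f => [|n IHn] f; first by rewrite inE => /eqP->.
by case/faces_SP => f0 _ /omega_faceP[->|[i _ ->]].
Qed.

Lemma mem_vtx f i : size f = 5 -> vtx f i \in f.
Proof. by move=> size_f; rewrite mem_nth // size_f ltn_pmod. Qed.

Lemma consecP f u w :
  size f = 5 -> consec f u w -> exists2 i, i < 5 & u = vtx f i /\ w = vtx f i.+1.
Proof.
move=> size_f /hasP[i]; rewrite mem_iota add0n => /andP[_ lt_i5] /andP[/eqP<- /eqP<-].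
by exists i => //; rewrite modn_small.
Qed.

Lemma consec_vtx f i : size f = 5 -> consec f (vtx f i) (vtx f i.+1).
Proof.
move=> size_f; apply/hasP; exists (i %% 5); first by rewrite mem_iota ltn_pmod.
apply/andP; split=> //; apply/eqP/vtx_eq; lia.
Qed.

Inductive omega_edge f u w : Prop :=
| EdgeCen e of u = cen f e & w = cen f e.+1
| EdgeVtxMid e of u = vtx f e & w = mid f e
| EdgeMidVtx e of u = mid f e & w = vtx f e.+1
| EdgeMidCen e of u = mid f e & w = cen f e.

Lemma consec_omega f g u w : g \in omega_face f -> consec g u w ->
  omega_edge f u w \/ omega_edge f w u.
Proof.
case/omega_faceP => [->|[i _ ->]].
  case/consecP => [|k _ [-> ->]]; first exact: size_central.
  by rewrite !vtx_central; left; apply: EdgeCen.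
case/consecP => [//|k lt_k5 [-> ->]].
case: k lt_k5 => [|[|[|[|[|k]]]]] //= _.
- by left; apply: EdgeVtxMid.
- by left; apply: EdgeMidCen.
- by right; apply: (EdgeCen (e := i + 4)); rewrite // (@cen_eq f _ i) //; lia.
- by right; apply: EdgeMidCen.
- by left; apply: (EdgeMidVtx (e := i + 4)); rewrite // vtx_addn4S.
Qed.

Lemma adjK_sym N u w : adjK N u w = adjK N w u.
Proof. by apply: eq_has => g; rewrite orbC. Qed.

Lemma vertK_vtx N f i : f \in faces N -> vertK N (vtx f i).
Proof. by move=> fN; apply/hasP; exists f; rewrite // mem_vtx // (size_faces fN). Qed.

Lemma adjK_vtx N f i : f \in faces N -> adjK N (vtx f i) (vtx f i.+1).
Proof. by move=> fN; apply/hasP; exists f; rewrite // consec_vtx // (size_faces fN). Qed.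

Lemma vertKP N u : vertK N u -> exists2 f, f \in faces N & exists2 i, i < 5 & u = vtx f i.
Proof.
case/hasP => f fN uf; exists f => //; have size_f := size_faces fN.
have lt_u5 : index u f < 5 by rewrite -size_f index_mem.
by exists (index u f); rewrite // modn_small // nth_index.
Qed.

Lemma adjK_vertK N u w : adjK N u w -> vertK N u /\ vertK N w.
Proof.
case/hasP => f fN; have size_f := size_faces fN.
by case/orP => /consecP[] // i _ [-> ->]; split; apply: vertK_vtx.
Qed.

Lemma adjKS N u w : adjK N.+1 u w ->
  exists2 f, f \in faces N & omega_edge f u w \/ omega_edge f w u.
Proof.
case/hasP => g /faces_SP[f fN gf] /orP[] /(consec_omega gf) edge_uw; exists f => //.
by case: edge_uw; auto.
Qed.

Lemma vertKS N u : vertK N.+1 u ->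
  exists2 f, f \in faces N & exists e, [\/ u = vtx f e, u = mid f e | u = cen f e].
Proof.
case/hasP => g /faces_SP[f fN gf] ug; exists f => //.
case/omega_faceP: gf ug => [->|[i _ ->]].
  by case/mapP => e _ ->; exists e; constructor 3.
rewrite !inE => /or4P[/eqP->|/eqP->|/eqP->|/orP[/eqP->|/eqP->]].
- by exists i; constructor 1.
- by exists i; constructor 2.
- by exists i; constructor 3.
- by exists (i + 4); constructor 3.
- by exists (i + 4); constructor 2.
Qed.

Lemma petal_faces N f e : f \in faces N -> petal f (e %% 5) \in faces N.+1.
Proof. by move=> fN; apply/faces_SP; exists f; rewrite // petal_in // ltn_pmod. Qed.

Lemma vertKS_face N f e : f \in faces N ->
  [/\ vertK N.+1 (vtx f e), vertK N.+1 (mid f e) & vertK N.+1 (cen f e)].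
Proof.
move=> fN; have petal_e := petal_faces e fN.
rewrite /vertK; split; apply/hasP; exists (petal f (e %% 5)) => //;
  by rewrite !inE (mid_eq f (modn_mod e 5)) (cen_eq f (modn_mod e 5)) ?modn_mod eqxx ?orbT.
Qed.

Lemma vertK_succ N u : vertK N u -> vertK N.+1 u.
Proof. by case/vertKP => f fN [i _ ->]; case: (vertKS_face i fN). Qed.

Lemma adjK_petal N f e : f \in faces N ->
  adjK N.+1 (vtx f e) (mid f e) /\ adjK N.+1 (mid f e) (vtx f e.+1).
Proof.
move=> fN; split; apply/hasP.
  exists (petal f (e %% 5)); first exact: petal_faces.
  by rewrite /consec /= (mid_eq f (modn_mod e 5)) modn_mod !eqxx.
exists (petal f (e.+1 %% 5)); first exact: petal_faces.
have mid_e : mid f (e.+1 %% 5 + 4) = mid f e by apply: mid_eq; lia.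
by rewrite /consec /= mid_e modn_mod !eqxx !orbT.
Qed.

(** * Well-formedness of the stages *)

Definition faces_uniq N := forall f, f \in faces N -> uniq f.

Definition edge_face_inj N := forall f g, f \in faces N -> g \in faces N ->
  forall i j, i < 5 -> j < 5 ->
  vtx f i = vtx g j -> vtx f i.+1 = vtx g j.+1 -> f = g /\ i = j.

(* This keeps the new names [mid f e], [cen f e] of [K_N.+1] apart from the
   vertices of [K_N]. *)
Definition compound_nonadj N := forall u a b, vertK N u -> (u = Mid a b \/ u = Cen a b) ->
  [/\ vertK N a, vertK N b & ~~ adjK N a b].

Definition stage_inv N := [/\ faces_uniq N, edge_face_inj N & compound_nonadj N].

Section NewVertices.
Variable N : nat.
Hypothesis compound_N : compound_nonadj N.

Lemma vertK_mkMid a b : adjK N a b -> vertK N (mkMid a b) = false.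
Proof.
move=> adj_ab; apply/negP => mid_N.
case: (mkMidE a b) => mid_def; rewrite mid_def in mid_N;
  by case: (compound_N mid_N (or_introl erefl)) => _ _; rewrite ?[adjK N b a]adjK_sym adj_ab.
Qed.

Lemma vertK_Cen a b : adjK N a b -> vertK N (Cen a b) = false.
Proof.
move=> adj_ab; apply/negP => cen_N.
by case: (compound_N cen_N (or_intror erefl)) => _ _; rewrite adj_ab.
Qed.

Lemma vertK_mid f e : f \in faces N -> vertK N (mid f e) = false.
Proof. by move=> fN; rewrite vertK_mkMid ?adjK_vtx. Qed.

Lemma vertK_cen f e : f \in faces N -> vertK N (cen f e) = false.
Proof. by move=> fN; rewrite vertK_Cen ?adjK_vtx. Qed.

Lemma adjKS_old a b : vertK N a -> vertK N b -> adjK N.+1 a b = false.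
Proof.
move=> aN bN; apply/negP => /adjKS[f fN].
by case=> [] [] e a_def b_def; move: aN bN; rewrite a_def b_def ?vertK_mid ?vertK_cen.
Qed.

End NewVertices.

Lemma stage_inv0 : stage_inv 0.
Proof.
have vtx0 i : i < 5 -> vtx [seq Base i | i <- iota 0 5] i = Base i.
  by move=> lt_i5; rewrite (nth_map 0) ?size_iota ?modn_small // nth_iota.
split.
- by move=> f; rewrite inE => /eqP->.
- move=> f g; rewrite !inE => /eqP-> /eqP-> i j lt_i5 lt_j5.
  by rewrite (vtx0 i) // (vtx0 j) // => -[->].
- by move=> u a b u0 [] u_def; rewrite u_def in u0.
Qed.

Section StageInvS.
Variable N : nat.
Hypothesis inv_N : stage_inv N.

Let uniq_N : faces_uniq N. Proof. by case: inv_N. Qed.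
Let edge_inj_N : edge_face_inj N. Proof. by case: inv_N. Qed.
Let compound_N : compound_nonadj N. Proof. by case: inv_N. Qed.

Lemma vtx_inj f i j : f \in faces N -> vtx f i = vtx f j -> i %% 5 = j %% 5.
Proof.
move=> fN /eqP; have size_f := size_faces fN.
by rewrite nth_uniq ?size_f ?ltn_pmod ?uniq_N // => /eqP.
Qed.

Lemma cen_inj f i j : f \in faces N -> cen f i = cen f j -> i %% 5 = j %% 5.
Proof. by move=> fN [/(vtx_inj fN)]. Qed.

Lemma mid_inj f i j : f \in faces N -> mid f i = mid f j ->
  i %% 5 = j %% 5 \/ (i.+1 %% 5 = j %% 5 /\ i %% 5 = j.+1 %% 5).
Proof.
by move=> fN /mkMid_inj[[/(vtx_inj fN) ? _]|[/(vtx_inj fN) ? /(vtx_inj fN) ?]]; auto.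
Qed.

Lemma faces_uniqS : faces_uniq N.+1.
Proof.
move=> g /faces_SP[f fN /omega_faceP[->|[i lt_i5 ->]]].
  rewrite map_inj_in_uniq ?iota_uniq // => a b; rewrite !mem_iota => a5 b5.
  by move/(cen_inj fN); rewrite !modn_small //; lia.
have old_i := vertK_vtx i fN.
have old_mid e : vtx f i <> mid f e by move=> eq_i; rewrite eq_i vertK_mid in old_i.
have old_cen e : vtx f i <> cen f e by move=> eq_i; rewrite eq_i vertK_cen in old_i.
have mid_cen e e' : mid f e <> cen f e' by exact: mkMid_neq_Cen.
rewrite /petal /= !inE; repeat (apply/andP; split) => //; rewrite ?negb_or;
  repeat (apply/andP; split); apply/eqP.
all: try exact: old_mid; try exact: old_cen; try exact: mid_cen;
  try (move/esym; exact: mid_cen).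
all: try (move/(cen_inj fN); lia).
all: move/(mid_inj fN); lia.
Qed.

Lemma compound_nonadjS : compound_nonadj N.+1.
Proof.
have old a b : vertK N a -> vertK N b ->
    [/\ vertK N.+1 a, vertK N.+1 b & ~~ adjK N.+1 a b].
  by move=> aN bN; rewrite adjKS_old // !vertK_succ.
move=> u a b /vertKS[f fN [e [->|->|->]]].
- by move=> u_def; have [aN bN _] := compound_N (vertK_vtx e fN) u_def; apply: old.
- case=> [mid_def|]; last by move/mkMid_neq_Cen.
  rewrite /mid in mid_def.
  by case: (mkMidE (vtx f e) (vtx f e.+1)) => mid_E; rewrite mid_E in mid_def;
    case: mid_def => <- <-; apply: old; apply: vertK_vtx.
- by case=> // -[<- <-]; apply: old; apply: vertK_vtx.
Qed.

(* From a directed edge (a, b) of [K_N.+1], [edge_code] recovers the edge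
   (v_e, v_e.+1) of [K_N] whose face it subdivides and a tag [t]; then
   [edge_decode f e t] is the face of [K_N.+1] and the position of [a] on it. *)
Definition edge_code (a b : pt) : (pt * pt) * nat :=
  if vertK N a then (if b is Mid p q then (if p == a then ((a, q), 1) else ((a, p), 1))
                     else ((a, a), 9))
  else if vertK N b then (if a is Mid p q then (if q == b then ((p, b), 5) else ((q, b), 5))
                          else ((b, b), 9))
  else match a, b with
  | Mid _ _, Cen x y => ((x, y), 2)
  | Cen x y, Cen z _ => if z == y then ((x, y), 0) else ((x, y), 3)
  | Cen x y, Mid _ _ => ((x, y), 4)
  | _, _ => ((a, b), 9)
  end.

Definition edge_decode f e t :=
  if t == 0 then (central f, e) else if t <= 3 then (petal f e, t.-1)
  else (petal f (e.+1 %% 5), t.-1).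

Lemma vtx_neqb f i j : f \in faces N -> i %% 5 != j %% 5 -> (vtx f i == vtx f j) = false.
Proof. by move=> fN /eqP neq_ij; apply/eqP => /(vtx_inj fN). Qed.

Lemma edge_codeP f g k : f \in faces N -> g \in omega_face f -> k < 5 ->
  exists e t, [/\ e < 5, edge_code (vtx g k) (vtx g k.+1) = ((vtx f e, vtx f e.+1), t)
                & edge_decode f e t = (g, k)].
Proof.
move=> fN gf lt_k5.
have mid_N e := vertK_mid compound_N e fN; have cen_N e := vertK_cen compound_N e fN.
have old e := vertK_vtx e fN.
case/omega_faceP: gf => [->|[i lt_i5 ->]].
  by exists k, 0; rewrite !vtx_central /edge_code !cen_N /cen eqxx.
have i4S : ((i + 4) %% 5).+1 %% 5 = i by lia.
have e4 : vtx f ((i + 4) %% 5) = vtx f (i + 4) by apply: vtx_eq; lia.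
have e4S : vtx f ((i + 4) %% 5).+1 = vtx f i by apply: vtx_eq; lia.
case: k lt_k5 => [|[|[|[|[|k]]]]] //= _.
- exists i, 1; rewrite /edge_code old /mid; split => //.
  by case: (mkMidE (vtx f i) (vtx f i.+1)) => ->; rewrite ?eqxx // vtx_neqb //; lia.
- exists i, 2; rewrite /edge_code mid_N cen_N /mid /cen; split => //.
  by case: (mkMidE (vtx f i) (vtx f i.+1)) => ->.
- by exists i, 3; rewrite /edge_code !cen_N /cen vtx_neqb //; lia.
- exists ((i + 4) %% 5), 4; rewrite ltn_pmod // e4 e4S /edge_decode /= i4S.
  rewrite /edge_code mid_N cen_N /mid /cen vtx_addn4S.
  by split=> //; case: (mkMidE (vtx f (i + 4)) (vtx f i)) => ->.
- exists ((i + 4) %% 5), 5; rewrite ltn_pmod // e4 e4S /edge_decode /= i4S.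
  rewrite /edge_code old mid_N /mid vtx_addn4S; split=> //.
  by case: (mkMidE (vtx f (i + 4)) (vtx f i)) => ->; rewrite ?eqxx // vtx_neqb //; lia.
Qed.

Lemma edge_face_injS : edge_face_inj N.+1.
Proof.
move=> g g' /faces_SP[f fN gf] /faces_SP[f' f'N g'f'] i j lt_i5 lt_j5 eq_i eq_iS.
have [e [t [lt_e5 code_i decode_i]]] := edge_codeP fN gf lt_i5.
have [e' [t' [lt_e'5 code_j decode_j]]] := edge_codeP f'N g'f' lt_j5.
rewrite eq_i eq_iS code_j in code_i; case: code_i => eq_e eq_eS eq_t; subst t'.
have [eq_f eq_e'] := edge_inj_N f'N fN lt_e'5 lt_e5 eq_e eq_eS.
by move: decode_j; rewrite eq_f eq_e' decode_i => -[-> ->].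
Qed.

Lemma stage_invS : stage_inv N.+1.
Proof. by split; [exact: faces_uniqS | exact: edge_face_injS | exact: compound_nonadjS]. Qed.

End StageInvS.

Lemma stage_invN N : stage_inv N.
Proof. by elim: N => [|N IHN]; [exact: stage_inv0 | exact: stage_invS]. Qed.

(** * Distances under subdivision *)

(* Distance from corner [i] to corner [j] along the boundary of a pentagon;
   [4 * j] stands for [- j] modulo 5. *)
Definition cdist5 i j := minn ((i + 4 * j) %% 5) (5 - (i + 4 * j) %% 5).

Section Reach.
Variables (N : nat) (x0 : pt).

Definition reach k u := exists p, [/\ path (adjK N) x0 p, last x0 p = u & size p <= k].

Lemma reach0 : reach 0 x0. Proof. by exists [::]. Qed.

Lemma reach_step k u w : reach k u -> adjK N u w -> reach k.+1 w.
Proof.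
case=> p [x0p last_p size_p] adj_uw; exists (rcons p w).
by rewrite rcons_path x0p last_p last_rcons size_rcons.
Qed.

Variable f : seq pt.
Hypothesis fN : f \in faces N.

Lemma reach_fwd k s n : reach k (vtx f s) -> reach (k + n) (vtx f (s + n)).
Proof.
elim: n => [|n IHn] reach_s; first by rewrite !addn0.
by rewrite !addnS; apply: reach_step (IHn reach_s) (adjK_vtx _ fN).
Qed.

Lemma reach_bwd k s n : reach k (vtx f s) -> reach (k + n) (vtx f (s + 4 * n)).
Proof.
elim: n => [|n IHn] reach_s; first by rewrite addn0 muln0 addn0.
rewrite addnS; apply: reach_step (IHn reach_s) _.
rewrite adjK_sym (@vtx_eq f (s + 4 * n) (s + 4 * n.+1).+1); last by lia.
exact: adjK_vtx.
Qed.

Lemma reach_around k s t : reach k (vtx f s) -> reach (k + cdist5 s t) (vtx f t).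
Proof.
move=> reach_s; rewrite /cdist5; set d := (s + 4 * t) %% 5.
have lt_d5 : d < 5 by rewrite ltn_pmod.
have [le_d2|lt2d] := leqP d 2.
  rewrite (_ : minn d (5 - d) = d) ?(@vtx_eq f t (s + 4 * d)); try (rewrite /d; lia).
  exact: reach_bwd.
rewrite (_ : minn d (5 - d) = 5 - d) ?(@vtx_eq f t (s + (5 - d))); try (rewrite /d; lia).
exact: reach_fwd.
Qed.

End Reach.

Section SubdividedReach.
Variables (N : nat) (x0 : pt).
Hypothesis inv_N : stage_inv N.
Notation reach := (reach N x0).

Let edge_inj_N : edge_face_inj N. Proof. by case: inv_N. Qed.
Let compound_N : compound_nonadj N. Proof. by case: inv_N. Qed.

Definition cen_reach L f i := forall j, j < 5 -> exists k1 k2,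
  [/\ reach k1 (vtx f j), reach k2 (vtx f j.+1) & k1 + k2 <= L + 1 + cdist5 i j].

(* What a path of length [L] in [K_N.+1] from [x0] to [u] guarantees about
   distances from [x0] in [K_N]. *)
Definition sub_reach L u :=
  if vertK N u then exists k, reach k u /\ 2 * k <= L else
  match u with
  | Mid a b => exists ka kb, [/\ reach ka a, reach kb b & ka + kb <= L]
  | Cen a b => forall f, f \in faces N -> forall i, i < 5 ->
                 vtx f i = a -> vtx f i.+1 = b -> cen_reach L f i
  | Base _ => False
  end.

Lemma sub_reach_old L u : vertK N u -> sub_reach L u <-> exists k, reach k u /\ 2 * k <= L.
Proof. by rewrite /sub_reach => ->. Qed.

Lemma sub_reach_mkMid L a b : adjK N a b ->
  sub_reach L (mkMid a b) <-> exists ka kb, [/\ reach ka a, reach kb b & ka + kb <= L].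
Proof.
move=> adj_ab; rewrite /sub_reach vertK_mkMid //.
case: (mkMidE a b) => -> //.
by split=> -[ka [kb [reach_a reach_b le_L]]]; exists kb, ka; rewrite addnC.
Qed.

Variable f : seq pt.
Hypothesis fN : f \in faces N.

Lemma cen_reach_mod L i : cen_reach L f (i %% 5) <-> cen_reach L f i.
Proof.
have cdist_mod j : cdist5 (i %% 5) j = cdist5 i j by rewrite /cdist5 modnDml.
by split=> cen_i j /cen_i[k1 [k2 [? ? le_k]]]; exists k1, k2; rewrite cdist_mod in le_k *.
Qed.

Lemma sub_reach_cen L e : sub_reach L (cen f e) <-> cen_reach L f e.
Proof.
rewrite /sub_reach vertK_cen //; split.
  move=> cen_e; apply/cen_reach_mod; apply: cen_e; rewrite ?ltn_pmod ?modn_mod //.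
  by apply: vtx_eq; lia.
move=> cen_e f' f'N i lt_i5 eq_i eq_iS.
have eq_i' : vtx f' i = vtx f (e %% 5) by rewrite modn_mod.
have eq_iS' : vtx f' i.+1 = vtx f (e %% 5).+1 by rewrite eq_iS; apply: vtx_eq; lia.
have [-> ->] := edge_inj_N f'N fN lt_i5 (ltn_pmod e (isT : 0 < 5)) eq_i' eq_iS'.
exact/cen_reach_mod.
Qed.

Lemma cen_reach_succ L e e' : (forall j, cdist5 e j <= cdist5 e' j + 1) ->
  cen_reach L f e -> cen_reach L.+1 f e'.
Proof.
move=> le_cdist cen_e j lt_j5; have [k1 [k2 [reach1 reach2 le_k]]] := cen_e j lt_j5.
by exists k1, k2; split => //; have := le_cdist j; lia.
Qed.

Lemma sub_reach_cen_mid L e : sub_reach L (cen f e) -> sub_reach L.+1 (mid f e).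
Proof.
move/sub_reach_cen => cen_e; apply/sub_reach_mkMid; first exact: adjK_vtx.
have [k1 [k2 [reach1 reach2 le_k]]] := cen_e _ (ltn_pmod e (isT : 0 < 5)).
exists k1, k2; rewrite !modn_mod in reach1 reach2.
rewrite (@vtx_eq f (e %% 5).+1 e.+1) in reach2; last by lia.
by split=> //; move: le_k; rewrite /cdist5; lia.
Qed.

(* From the cheaper endpoint of the edge, go around the pentagon. *)
Lemma sub_reach_mid_cen L e : sub_reach L (mid f e) -> sub_reach L.+1 (cen f e).
Proof.
case/sub_reach_mkMid=> [|ka [kb [reach_a reach_b le_L]]]; first exact: adjK_vtx.
apply/sub_reach_cen => j lt_j5.
have [le_ab|lt_ba] := leqP ka kb.
  exists (ka + cdist5 e j), (ka + cdist5 e j.+1); split; try exact: reach_around.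
  by rewrite /cdist5; lia.
exists (kb + cdist5 e.+1 j), (kb + cdist5 e.+1 j.+1); split; try exact: reach_around.
by rewrite /cdist5; lia.
Qed.

Lemma sub_reach_old_mid L a b : adjK N a b -> sub_reach L a -> sub_reach L.+1 (mkMid a b).
Proof.
move=> adj_ab; have [aN _] := adjK_vertK adj_ab.
case/(sub_reach_old _ aN) => k [reach_a le_L]; apply/sub_reach_mkMid => //.
by exists k, k.+1; split; [|exact: reach_step reach_a adj_ab|lia].
Qed.

Lemma sub_reach_mid_old L a b : adjK N a b -> sub_reach L (mkMid a b) -> sub_reach L.+1 a.
Proof.
move=> adj_ab; have [aN _] := adjK_vertK adj_ab.
case/sub_reach_mkMid=> // ka [kb [reach_a reach_b le_L]]; apply/sub_reach_old => //.
have [le_ab|lt_ba] := leqP ka kb; first by exists ka; split=> //; lia.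
by exists kb.+1; split; [apply: reach_step reach_b _; rewrite adjK_sym|lia].
Qed.

Lemma sub_reach_omega_edge L u w : omega_edge f u w ->
  (sub_reach L u -> sub_reach L.+1 w) /\ (sub_reach L w -> sub_reach L.+1 u).
Proof.
have adj_e e : adjK N (vtx f e) (vtx f e.+1) by exact: adjK_vtx.
have adj_e' e : adjK N (vtx f e.+1) (vtx f e) by rewrite adjK_sym.
case=> e -> ->; split.
- move/sub_reach_cen=> cen_e; apply/sub_reach_cen; apply: cen_reach_succ cen_e.
  by move=> j; rewrite /cdist5; lia.
- move/sub_reach_cen=> cen_e; apply/sub_reach_cen; apply: cen_reach_succ cen_e.
  by move=> j; rewrite /cdist5; lia.
- exact: sub_reach_old_mid.
- exact: sub_reach_mid_old.
- by rewrite /mid mkMidC; apply: sub_reach_mid_old.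
- by rewrite /mid mkMidC; apply: sub_reach_old_mid.
- exact: sub_reach_mid_cen.
- exact: sub_reach_cen_mid.
Qed.

End SubdividedReach.

Lemma sub_reach_path N x0 L u s : stage_inv N -> path (adjK N.+1) u s ->
  sub_reach N x0 L u -> sub_reach N x0 (L + size s) (last u s).
Proof.
move=> inv_N; elim: s u L => [|w s IHs] u L /=; first by rewrite addn0.
case/andP=> /adjKS[f fN edge_uw] path_s reach_u; rewrite addnS -addSn.
apply: IHs => //; case: edge_uw => edge_uw.
- exact: (sub_reach_omega_edge x0 inv_N fN L edge_uw).1.
- exact: (sub_reach_omega_edge x0 inv_N fN L edge_uw).2.
Qed.

Lemma path_adjKS_halve N x y s : vertK N x -> vertK N y ->
  path (adjK N.+1) x s -> last x s = y ->
  exists p, [/\ path (adjK N) x p, last x p = y & 2 * size p <= size s].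
Proof.
move=> xN yN path_s last_s.
have reach_x : sub_reach N x 0 x by apply/sub_reach_old => //; exists 0; split=> //; exact: reach0.
have := sub_reach_path (stage_invN N) path_s reach_x.
rewrite last_s add0n => /sub_reach_old[//|k [[p [path_p last_p size_p]] le_k]].
by exists p; split=> //; lia.
Qed.

(** * Embeddings and direct limits *)

Lemma vtx_map_emb f i : size f = 5 -> vtx (map emb f) i = emb (vtx f i).
Proof. by move=> size_f; rewrite (nth_map (Base 0)) // size_f ltn_pmod. Qed.

Lemma omega_face_emb f : size f = 5 -> omega_face (map emb f) = map (map emb) (omega_face f).
Proof.
move=> size_f; rewrite !omega_faceE map_cons /central -!map_comp.
by congr (_ :: _); apply: eq_map => i /=; rewrite /petal /cen /mid !vtx_map_emb // ?emb_mkMid.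
Qed.

Lemma faces_emb n f : f \in faces n -> map emb f \in faces n.+1.
Proof.
elim: n f => [|n IHn] f.
  by rewrite inE => /eqP->; apply/faces_SP; exists [seq Base i | i <- iota 0 5];
    rewrite ?mem_head ?omega_faceE.
case/faces_SP => f0 f0n ff0; apply/faces_SP; exists (map emb f0); first exact: IHn.
by rewrite omega_face_emb ?map_f // (size_faces f0n).
Qed.

Lemma vertK_emb n u : vertK n u -> vertK n.+1 (emb u).
Proof. by case/hasP => f fn uf; apply/hasP; exists (map emb f); rewrite ?faces_emb ?map_f. Qed.

Lemma adjK_emb n u w : adjK n u w -> adjK n.+1 (emb u) (emb w).
Proof.
case/hasP => f fn consec_uw; apply/hasP; exists (map emb f); first exact: faces_emb.
have size_f := size_faces fn.
by case/orP: consec_uw => /consecP[] // i _ [-> ->];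
  rewrite -!vtx_map_emb // consec_vtx ?orbT // size_map.
Qed.

Lemma vertK_lft n k u : vertK n u -> vertK (n + k) (lft k u).
Proof. by elim: k => [|k IHk] un; rewrite ?addn0 // addnS; apply/vertK_emb/IHk. Qed.

Lemma adjK_lft n k u w : adjK n u w -> adjK (n + k) (lft k u) (lft k w).
Proof. by elim: k => [|k IHk] adj_uw; rewrite ?addn0 // addnS; apply/adjK_emb/IHk. Qed.

Lemma adjKS_mkMid M a b : adjK M a b ->
  [/\ vertK M.+1 (mkMid a b), adjK M.+1 a (mkMid a b) & adjK M.+1 (mkMid a b) b].
Proof.
case/hasP => f fM consec_ab; have size_f := size_faces fM.
case/orP: consec_ab => /consecP[] // i _ [-> ->];
  have [_ mid_M _] := vertKS_face i fM; have [adj_vm adj_mv] := adjK_petal i fM.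
  by split.
by rewrite mkMidC; split; rewrite // adjK_sym.
Qed.

(* The name at stage [N] of a vertex [x] of a direct limit; meaningful only
   when [x.1 <= N], since the subtraction is truncated. *)
Notation at_stage N x := (lft (N - x.1) x.2).

Definition eventually (P : nat -> Prop) := exists M, forall N, M <= N -> P N.

Lemma eventuallyI (P Q : nat -> Prop) :
  eventually P -> eventually Q -> eventually (fun N => P N /\ Q N).
Proof.
case=> M1 P_M1 [M2 Q_M2]; exists (maxn M1 M2) => N; rewrite geq_max => /andP[le1 le2].
by split; [exact: P_M1|exact: Q_M2].
Qed.

Lemma at_stage_up M N (x : nat * pt) : x.1 <= M -> M <= N ->
  at_stage N x = lft (N - M) (at_stage M x).
Proof. by move=> le_xM le_MN; rewrite -lftD; congr lft; lia. Qed.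

Lemma lvert_eventually d x :
  lvert d x -> eventually (fun N => x.1 <= N /\ vertK (N + d) (at_stage N x)).
Proof.
case=> M [le_xM xM]; exists M => N le_MN; split; first by lia.
rewrite (at_stage_up le_xM le_MN) (_ : N + d = M + d + (N - M)); last by lia.
exact: vertK_lft.
Qed.

Lemma leq_vert_eventually x y : leq_vert x y -> eventually (fun N => at_stage N x = at_stage N y).
Proof.
case=> M [le_xM le_yM eq_xy]; exists M => N le_MN.
by rewrite (at_stage_up le_xM le_MN) (at_stage_up le_yM le_MN) eq_xy.
Qed.

Lemma ladj_chain_eventually d x t : ladj_chain d (x :: t) ->
  eventually (fun N => path (adjK (N + d)) (at_stage N x) (map (fun z => at_stage N z) t)).
Proof.
elim: t x => [|y t IHt] x /=; first by exists 0.
case=> -[M [le_xM le_yM adj_xy]] /IHt chain_t.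
have adj_xy_ev : eventually (fun N => adjK (N + d) (at_stage N x) (at_stage N y)).
  exists M => N le_MN; rewrite (at_stage_up le_xM le_MN) (at_stage_up le_yM le_MN).
  by rewrite (_ : N + d = M + d + (N - M)); [exact: adjK_lft|lia].
by case: (eventuallyI adj_xy_ev chain_t) => N' ev; exists N' => N /ev[-> ->].
Qed.

(** * Subdivided edge paths *)

Lemma size_omega_path x t : size (omega_path (x :: t)) = (size t).*2.+1.
Proof. by elim: t x => [|y t IHt] x //=; rewrite IHt doubleS. Qed.

Lemma plength_omega_path p : plength (omega_path p) = 2 * plength p.
Proof. by case: p => [|x t] //; rewrite /plength size_omega_path /= -mul2n. Qed.

Lemma pstart_omega_path p : pstart (omega_path p) = pstart p.
Proof. by case: p => [|x [|y t]]. Qed.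

Lemma pend_omega_path p : pend (omega_path p) = pend p.
Proof.
have last_omega d x t : last d (omega_path (x :: t)) = last x t.
  by elim: t d x => [|y t IHt] d x //=; rewrite IHt.
by case: p => [|x t] //; rewrite /pend last_omega.
Qed.

Lemma omega_path_cons x t : exists r, omega_path (x :: t) = x :: r.
Proof. by case: t => [|y t]; eexists. Qed.

Lemma lvert_succ x : lvert 0 x -> lvert 1 x.
Proof. by case=> M [le_xM xM]; exists M; rewrite addn0 in xM; rewrite addn1 vertK_succ. Qed.

Lemma ladj_lmid x y : ladj 0 x y ->
  [/\ lvert 1 (lmid x y), ladj 1 x (lmid x y) & ladj 1 (lmid x y) y].
Proof.
case=> M [le_xM le_yM adj_xy]; rewrite addn0 in adj_xy.
have [mid_M adj_xm adj_my] := adjKS_mkMid adj_xy.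
have le_mM : (lmid x y).1 <= M by rewrite /= geq_max le_xM le_yM.
have at_M : at_stage M (lmid x y) = mkMid (at_stage M x) (at_stage M y).
  by rewrite /= lft_mkMid -!lftD; congr (mkMid (lft _ _) (lft _ _)); lia.
by split; exists M; rewrite at_M addn1.
Qed.

Lemma omega_path_chain p : ladj_chain 0 p -> ladj_chain 1 (omega_path p).
Proof.
elim: p => [|x [|y t] IHp] //= [adj_xy chain_t].
have [_ adj_xm adj_my] := ladj_lmid adj_xy.
have [r omega_t] := omega_path_cons y t.
by move: (IHp chain_t); rewrite -/(omega_path (y :: t)) omega_t.
Qed.

Lemma omega_path_lvert p : (forall z, z \in p -> lvert 0 z) -> ladj_chain 0 p ->
  forall z, z \in omega_path p -> lvert 1 z.
Proof.
elim: p => [|x [|y t] IHp] //= vert_p.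
  by move=> _ z; rewrite inE => /eqP->; apply/lvert_succ/vert_p/mem_head.
case=> adj_xy chain_t z; rewrite -/(omega_path (y :: t)) !inE.
have [mid_xy _ _] := ladj_lmid adj_xy.
case/or3P=> [/eqP->|/eqP->|z_t]; [apply/lvert_succ/vert_p/mem_head|exact: mid_xy|].
by apply: IHp z_t => // w w_t; apply: vert_p; rewrite inE w_t orbT.
Qed.

Lemma omega_path_edge_path p : is_edge_path 0 p -> is_edge_path 1 (omega_path p).
Proof.
case: p => [[]//|x t] [_ [vert_p chain_p]].
split; first by case: (omega_path_cons x t) => r ->.
by split; [exact: omega_path_lvert|exact: omega_path_chain].
Qed.

Lemma path_vertK N x p : vertK N x -> path (adjK N) x p -> all (vertK N) (x :: p).
Proof.
elim: p x => [|y p IHp] x xN /=; first by rewrite xN.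
by case/andP=> adj_xy /(IHp y (adjK_vertK adj_xy).2) /= ->; rewrite xN.
Qed.

Lemma edge_path_stage N x p : vertK N x -> path (adjK N) x p ->
  is_edge_path 0 (map (pair N) (x :: p)).
Proof.
move=> xN path_p; split=> //; split.
  move=> u /mapP[w wp ->]; exists N; rewrite subnn addn0; split=> //.
  exact: (allP (path_vertK xN path_p)).
elim: p x {xN} path_p => [|y p IHp] x //= /andP[adj_xy path_p].
by split; [exists N; rewrite subnn addn0|exact: IHp].
Qed.

Lemma leq_vert_at_stage N x : x.1 <= N -> leq_vert (N, at_stage N x) x.
Proof. by move=> le_xN; exists N; rewrite /= subnn. Qed.

Lemma geodesic_stage_path N gamma p : is_geodesic 0 gamma ->
  (pstart gamma).1 <= N -> (pend gamma).1 <= N ->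
  vertK N (at_stage N (pstart gamma)) -> path (adjK N) (at_stage N (pstart gamma)) p ->
  last (at_stage N (pstart gamma)) p = at_stage N (pend gamma) ->
  plength gamma <= size p.
Proof.
move=> geo_g le_xN le_yN xN path_p last_p.
have := geo_g _ (edge_path_stage xN path_p) (leq_vert_at_stage le_xN).
rewrite /pend /= (last_map (pair N)) last_p => /(_ (leq_vert_at_stage le_yN)).
by rewrite /plength /= size_map.
Qed.

Lemma omega_path_geodesic gamma : is_edge_path 0 gamma -> is_geodesic 0 gamma ->
  is_geodesic 1 (omega_path gamma).
Proof.
case: gamma => [[]//|x t] [_ [vert_g _]] geo_g q [q_nil [_ chain_q]].
case: q q_nil chain_q => [//|z s] _ chain_q.
rewrite pstart_omega_path pend_omega_path /pstart /pend /= => start_q end_q.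
have [N ev] := eventuallyI (ladj_chain_eventually chain_q)
  (eventuallyI (eventuallyI (leq_vert_eventually start_q) (leq_vert_eventually end_q))
     (eventuallyI (lvert_eventually (vert_g _ (mem_head x t)))
                  (lvert_eventually (vert_g _ (mem_last x t))))).
have [path_q [[eq_start eq_end] [[le_xN xN] [le_yN yN]]]] := ev N (leqnn N).
rewrite addn1 eq_start in path_q; rewrite addn0 in xN yN.
have last_q : last (at_stage N x) [seq at_stage N w | w <- s] = at_stage N (last x t).
  by rewrite -eq_start (last_map (fun w => at_stage N w)) eq_end.
have [p [path_p last_p size_p]] := path_adjKS_halve xN yN path_q last_q.
have := geodesic_stage_path geo_g le_xN le_yN xN path_p last_p.
by rewrite /plength size_omega_path size_map -mul2n /= in size_p *; lia.
Qed.

Theorem mainTheorem20 (gamma : seq (nat * pt)) :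
  is_edge_path 0 gamma -> is_geodesic 0 gamma ->
  [/\ is_edge_path 1 (omega_path gamma),
      plength (omega_path gamma) = 2 * plength gamma
    & is_geodesic 1 (omega_path gamma)].
Proof.
move=> path_gamma geo_gamma; split.
- exact: omega_path_edge_path.
- exact: plength_omega_path.
- exact: omega_path_geodesic.
Qed.
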